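(* Let $\mathbb G$ be a strict 2-group. Then $\mathbb G$ is split if and only if there exists a normalized set-theoretic section $s:\pi_0(\mathbb G)\to\mathsf G_0$ of $p$ such that the map $\hat s:\pi_0(\mathbb G)\times\pi_0(\mathbb G)\to K_0$, $\hat s([x],[x'])=s[x]\otimes s[x']\otimes s[x\otimes x']^{-1}$, admits a normalized lifting $\psi_s:\pi_0(\mathbb G)\times\pi_0(\mathbb G)\to\mathsf H_0$ satisfying, for all $[x],[x'],[x'']\in\pi_0(\mathbb G)$, $$\psi_s([x],[x'])\cdot\psi_s([x\otimes x'],[x''])=\big([x]\lhd_s\psi_s([x'],[x''])\big)\cdot\psi_s([x],[x'\otimes x'']).$$
   Context: A strict 2-group is a monoidal groupoid $(\mathcal G,\otimes,e)$ with trivial associator and unitors in which every object $x$ has a strict inverse $x^{-1}$ ($x\otimes x^{-1}=e=x^{-1}\otimes x$). $\mathsf G_0$ is the group of objects under $\otimes$; $\pi_0(\mathbb G)$ is the group of isomorphism classes with $[x][y]=[x\otimes y]$, and $p:\mathsf G_0\to\pi_0(\mathbb G)$ the projection; $K_0=\ker p$ is the set of objects isomorphic to $e$. $\mathsf H_0$ is the group of all morphisms of $\mathcal G$ with domain $e$, with product $f\cdot f'=f\otimes f'$; sending a morphism to its codomain is a homomorphism $t:\mathsf H_0\to\mathsf G_0$ with image $K_0$. A section $s$ is normalized if $s[e]=e$. A lifting of $\hat s$ is a map $\psi_s$ with $t\circ\psi_s=\hat s$; it is normalized if $\psi_s([e],[x])=\psi_s([x],[e])=id_e$ for all $[x]$.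 For $f\in\mathsf H_0$, $[x]\lhd_s f:=id_{s[x]}\otimes f\otimes id_{s[x]^{-1}}$. A 2-group is split if it is equivalent (monoidal functor with pseudo-inverse up to monoidal natural isomorphism) to an elementary 2-group $\mathsf A[1]\rtimes\mathsf G[0]$, for some group $\mathsf G$ and left $\mathsf G$-module $\mathsf A$: the strict 2-group with objects the elements of $\mathsf G$, morphisms $(a,g):g\to g$, composition $(a',g)\circ(a,g)=(a'+a,g)$, tensor $g\otimes g'=gg'$, $(a,g)\otimes(a',g')=(a+g\lhd a',gg')$. *)

Set Implicit Arguments.

(* Morphisms form one type [Mor] with domain/codomain maps; composition,
   inverse and tensor are total functions whose values are only constrained
   (by the axioms) on composable pairs.  [comp g f] is  g o f. *)
Record TwoGroupData := {
  Ob : Type;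
  Mor : Type;
  dom : Mor -> Ob;
  cod : Mor -> Ob;
  idm : Ob -> Mor;
  comp : Mor -> Mor -> Mor;
  minv : Mor -> Mor;
  tens : Ob -> Ob -> Ob;
  tensm : Mor -> Mor -> Mor;
  unit : Ob;
  oinv : Ob -> Ob }.

Arguments dom {t} _.
Arguments cod {t} _.
Arguments idm {t} _.
Arguments comp {t} _ _.
Arguments minv {t} _.
Arguments tens {t} _ _.
Arguments tensm {t} _ _.
Arguments oinv {t} _.

Record IsStrict2Group (G : TwoGroupData) : Prop := {
  dom_id : forall x : Ob G, dom (idm x) = x;
  cod_id : forall x : Ob G, cod (idm x) = x;
  dom_comp : forall f g : Mor G, cod f = dom g -> dom (comp g f) = dom f;
  cod_comp : forall f g : Mor G, cod f = dom g -> cod (comp g f) = cod g;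
  comp_id_r : forall f : Mor G, comp f (idm (dom f)) = f;
  comp_id_l : forall f : Mor G, comp (idm (cod f)) f = f;
  comp_assoc : forall f g h : Mor G, cod f = dom g -> cod g = dom h ->
      comp h (comp g f) = comp (comp h g) f;
  dom_minv : forall f : Mor G, dom (minv f) = cod f;
  cod_minv : forall f : Mor G, cod (minv f) = dom f;
  minv_l : forall f : Mor G, comp (minv f) f = idm (dom f);
  minv_r : forall f : Mor G, comp f (minv f) = idm (cod f);
  dom_tensm : forall f g : Mor G, dom (tensm f g) = tens (dom f) (dom g);
  cod_tensm : forall f g : Mor G, cod (tensm f g) = tens (cod f) (cod g);
  tensm_id : forall x y : Ob G, tensm (idm x) (idm y) = idm (tens x y);
  tensm_comp : forall f f' g g' : Mor G, cod f = dom f' -> cod g = dom g' ->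
      tensm (comp f' f) (comp g' g) = comp (tensm f' g') (tensm f g);
  tens_assoc : forall x y z : Ob G, tens x (tens y z) = tens (tens x y) z;
  tens_unit_l : forall x : Ob G, tens (unit G) x = x;
  tens_unit_r : forall x : Ob G, tens x (unit G) = x;
  tensm_assoc : forall f g h : Mor G, tensm f (tensm g h) = tensm (tensm f g) h;
  tensm_unit_l : forall f : Mor G, tensm (idm (unit G)) f = f;
  tensm_unit_r : forall f : Mor G, tensm f (idm (unit G)) = f;
  tens_oinv_r : forall x : Ob G, tens x (oinv x) = unit G;
  tens_oinv_l : forall x : Ob G, tens (oinv x) x = unit G }.

(* x and y are isomorphic, i.e. [x] = [y] in pi_0. *)
Definition iso {G : TwoGroupData} (x y : Ob G) : Prop :=
  exists f : Mor G, dom f = x /\ cod f = y.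

Record MonFunData (G H : TwoGroupData) := {
  fo : Ob G -> Ob H;
  fm : Mor G -> Mor H;
  fmu : Ob G -> Ob G -> Mor H;
  feps : Mor H }.

Record IsMonFun (G H : TwoGroupData) (F : MonFunData G H) : Prop := {
  mf_dom : forall f, dom (fm F f) = fo F (dom f);
  mf_cod : forall f, cod (fm F f) = fo F (cod f);
  mf_id : forall x, fm F (idm x) = idm (fo F x);
  mf_comp : forall f g, cod f = dom g -> fm F (comp g f) = comp (fm F g) (fm F f);
  mf_mu_dom : forall x y, dom (fmu F x y) = tens (fo F x) (fo F y);
  mf_mu_cod : forall x y, cod (fmu F x y) = fo F (tens x y);
  mf_mu_nat : forall f g,
      comp (fmu F (cod f) (cod g)) (tensm (fm F f) (fm F g))
      = comp (fm F (tensm f g)) (fmu F (dom f) (dom g));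
  mf_eps_dom : dom (feps F) = unit H;
  mf_eps_cod : cod (feps F) = fo F (unit G);
  mf_assoc : forall x y z,
      comp (fmu F (tens x y) z) (tensm (fmu F x y) (idm (fo F z)))
      = comp (fmu F x (tens y z)) (tensm (idm (fo F x)) (fmu F y z));
  mf_unit_l : forall x,
      comp (fmu F (unit G) x) (tensm (feps F) (idm (fo F x))) = idm (fo F x);
  mf_unit_r : forall x,
      comp (fmu F x (unit G)) (tensm (idm (fo F x)) (feps F)) = idm (fo F x) }.

Definition mfcomp (G H L : TwoGroupData) (F : MonFunData G H) (K : MonFunData H L)
  : MonFunData G L :=
  {| fo := fun x => fo K (fo F x);
     fm := fun f => fm K (fm F f);
     fmu := fun x y => comp (fm K (fmu F x y)) (fmu K (fo F x) (fo F y));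
     feps := comp (fm K (feps F)) (feps K) |}.

Definition mfid (G : TwoGroupData) : MonFunData G G :=
  {| fo := fun x => x; fm := fun f => f;
     fmu := fun x y => idm (tens x y); feps := idm (unit G) |}.

(* Monoidal natural transformation a : F => F' (automatically invertible,
   since all morphisms are invertible). *)
Record IsMonNat (G H : TwoGroupData) (F F' : MonFunData G H) (a : Ob G -> Mor H)
  : Prop := {
  mn_dom : forall x, dom (a x) = fo F x;
  mn_cod : forall x, cod (a x) = fo F' x;
  mn_nat : forall f, comp (a (cod f)) (fm F f) = comp (fm F' f) (a (dom f));
  mn_mu : forall x y,
      comp (a (tens x y)) (fmu F x y) = comp (fmu F' x y) (tensm (a x) (a y));
  mn_eps : comp (a (unit G)) (feps F) = feps F' }.

Definition Equivalent (G H : TwoGroupData) : Prop :=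
  exists (F : MonFunData G H) (F' : MonFunData H G),
    IsMonFun F /\ IsMonFun F' /\
    (exists a, IsMonNat (mfcomp F F') (mfid G) a) /\
    (exists b, IsMonNat (mfcomp F' F) (mfid H) b).

Record Group := {
  gcar : Type;
  gmul : gcar -> gcar -> gcar;
  gone : gcar;
  ginv : gcar -> gcar;
  gmulA : forall x y z, gmul x (gmul y z) = gmul (gmul x y) z;
  gmul1l : forall x, gmul gone x = x;
  gmul1r : forall x, gmul x gone = x;
  gmulVl : forall x, gmul (ginv x) x = gone;
  gmulVr : forall x, gmul x (ginv x) = gone }.

Record GModule (Gr : Group) := {
  mcar : Type;
  madd : mcar -> mcar -> mcar;
  mzero : mcar;
  mopp : mcar -> mcar;
  maddA : forall a b c, madd a (madd b c) = madd (madd a b) c;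
  maddC : forall a b, madd a b = madd b a;
  madd0 : forall a, madd a mzero = a;
  maddN : forall a, madd a (mopp a) = mzero;
  act : gcar Gr -> mcar -> mcar;
  actD : forall g a b, act g (madd a b) = madd (act g a) (act g b);
  act1 : forall a, act (gone Gr) a = a;
  actM : forall g h a, act (gmul Gr g h) a = act g (act h a) }.

(* The elementary 2-group  A[1] x| Gr[0]. Morphisms (a,g) : g -> g. *)
Definition elementary (Gr : Group) (A : GModule Gr) : TwoGroupData :=
  {| Ob := gcar Gr;
     Mor := (mcar A * gcar Gr)%type;
     dom := fun p => snd p;
     cod := fun p => snd p;
     idm := fun g => (mzero A, g);
     comp := fun p' p => (madd A (fst p') (fst p), snd p);
     minv := fun p => (mopp A (fst p), snd p);
     tens := gmul Gr;
     tensm := fun p p' => (madd A (fst p) (act A (snd p) (fst p')),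
                           gmul Gr (snd p) (snd p'));
     unit := gone Gr;
     oinv := ginv Gr |}.

Definition is_split (G : TwoGroupData) : Prop :=
  exists (Gr : Group) (A : GModule Gr), Equivalent G (elementary A).

(* Maps out of pi_0(G) are encoded as functions on objects that are constant
   on isomorphism classes. *)
Definition shat {G : TwoGroupData} (s : Ob G -> Ob G) (x x' : Ob G) : Ob G :=
  tens (tens (s x) (s x')) (oinv (s (tens x x'))).

Definition lact {G : TwoGroupData} (s : Ob G -> Ob G) (x : Ob G) (f : Mor G) : Mor G :=
  tensm (tensm (idm (s x)) f) (idm (oinv (s x))).

From Stdlib Require Import ProofIrrelevance ClassicalEpsilon.

(* The proof works with the untwisted form of psi,
     Phi x y := psi x y (x) id_{s[x y]}  :  s[x y] -> s[x] (x) s[y],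
   for which the twisted cocycle identity becomes the plain associativity
   (Phi x y (x) id) o Phi (x y) z = (id (x) Phi y z) o Phi x (y z)
   (lemma [cocycle_psi_phi]). *)

Section ObjectGroup.
Variable G : TwoGroupData.
Hypothesis HG : IsStrict2Group G.
Local Notation e := (unit G).

Lemma tensA (x y z : Ob G) : tens (tens x y) z = tens x (tens y z).
Proof. symmetry; apply (tens_assoc HG). Qed.
Lemma tens1l (x : Ob G) : tens e x = x. Proof. apply (tens_unit_l HG). Qed.
Lemma tens1r (x : Ob G) : tens x e = x. Proof. apply (tens_unit_r HG). Qed.
Lemma tensVr (x : Ob G) : tens x (oinv x) = e. Proof. apply (tens_oinv_r HG). Qed.
Lemma tensVl (x : Ob G) : tens (oinv x) x = e. Proof. apply (tens_oinv_l HG). Qed.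
Lemma tensKV (x y : Ob G) : tens x (tens (oinv x) y) = y.
Proof. rewrite <- tensA, tensVr, tens1l; reflexivity. Qed.
Lemma tensVK (x y : Ob G) : tens (oinv x) (tens x y) = y.
Proof. rewrite <- tensA, tensVl, tens1l; reflexivity. Qed.
Lemma oinv_unique (x y : Ob G) : tens x y = e -> y = oinv x.
Proof. intro H. rewrite <- (tensVK x y), H, tens1r. reflexivity. Qed.
Lemma oinv1 : oinv e = e.
Proof. symmetry; apply oinv_unique, tens1l. Qed.
Lemma oinvM (x y : Ob G) : oinv (tens x y) = tens (oinv y) (oinv x).
Proof. symmetry; apply oinv_unique. rewrite tensA, tensKV, tensVr. reflexivity. Qed.

Lemma domI (x : Ob G) : dom (idm x) = x. Proof. apply (dom_id HG). Qed.
Lemma codI (x : Ob G) : cod (idm x) = x. Proof. apply (cod_id HG). Qed.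
Lemma domT (f g : Mor G) : dom (tensm f g) = tens (dom f) (dom g).
Proof. apply (dom_tensm HG). Qed.
Lemma codT (f g : Mor G) : cod (tensm f g) = tens (cod f) (cod g).
Proof. apply (cod_tensm HG). Qed.
Lemma domV (f : Mor G) : dom (minv f) = cod f. Proof. apply (dom_minv HG). Qed.
Lemma codV (f : Mor G) : cod (minv f) = dom f. Proof. apply (cod_minv HG). Qed.
Lemma domC (f g : Mor G) : cod f = dom g -> dom (comp g f) = dom f.
Proof. apply (dom_comp HG). Qed.
Lemma codC (f g : Mor G) : cod f = dom g -> cod (comp g f) = cod g.
Proof. apply (cod_comp HG). Qed.

End ObjectGroup.

(* Object equations are normalised in the group of objects; [dc_solve] proves
   the composability side conditions ("cod f = dom g") that pervade the file,
   using the domain/codomain equations available in the context. *)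
Global Hint Rewrite tensA tens1l tens1r tensVr tensVl tensKV tensVK oinv1 oinvM
  using assumption : tens_simpl.
Global Hint Rewrite domI domT codI codT domV codV using assumption : domcod.

Ltac dc_norm :=
  repeat first
   [ progress (autorewrite with domcod)
   | rewrite domC; [ | assumption | dc_solve ]
   | rewrite codC; [ | assumption | dc_solve ]
   | match goal with H : dom ?f = _ |- context[dom ?f] => rewrite H end
   | match goal with H : cod ?f = _ |- context[cod ?f] => rewrite H end ]
with dc_solve :=
  dc_norm; autorewrite with tens_simpl; first [assumption | reflexivity | congruence].

Section Morphisms.
Variable G : TwoGroupData.
Hypothesis HG : IsStrict2Group G.
Local Notation e := (unit G).

Lemma compI_r (f : Mor G) x : dom f = x -> comp f (idm x) = f.
Proof. intros <-; apply (comp_id_r HG). Qed.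
Lemma compI_l (f : Mor G) x : cod f = x -> comp (idm x) f = f.
Proof. intros <-; apply (comp_id_l HG). Qed.
Lemma idm_comp_idm (x : Ob G) : comp (idm x) (idm x) = idm x.
Proof. apply compI_l; dc_solve. Qed.
Lemma compA (f g h : Mor G) : cod f = dom g -> cod g = dom h ->
  comp h (comp g f) = comp (comp h g) f.
Proof. apply (comp_assoc HG). Qed.
Lemma interchange (f f' g g' : Mor G) : cod f = dom f' -> cod g = dom g' ->
  tensm (comp f' f) (comp g' g) = comp (tensm f' g') (tensm f g).
Proof. apply (tensm_comp HG). Qed.
Lemma tensmI (x y : Ob G) : tensm (idm x) (idm y) = idm (tens x y).
Proof. apply (tensm_id HG). Qed.
Lemma tensmA (f g h : Mor G) : tensm (tensm f g) h = tensm f (tensm g h).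
Proof. symmetry; apply (tensm_assoc HG). Qed.
Lemma tensm1l (f : Mor G) : tensm (idm e) f = f. Proof. apply (tensm_unit_l HG). Qed.
Lemma tensm1r (f : Mor G) : tensm f (idm e) = f. Proof. apply (tensm_unit_r HG). Qed.
Lemma tensmIA (x y : Ob G) (f : Mor G) :
  tensm (idm x) (tensm (idm y) f) = tensm (idm (tens x y)) f.
Proof. rewrite <- tensmA, tensmI; reflexivity. Qed.
Lemma compVl (f : Mor G) : comp (minv f) f = idm (dom f). Proof. apply (minv_l HG). Qed.
Lemma compVr (f : Mor G) : comp f (minv f) = idm (cod f). Proof. apply (minv_r HG). Qed.

Lemma compVK (f g : Mor G) : cod g = dom f -> comp (minv f) (comp f g) = g.
Proof. intro H. rewrite compA by dc_solve. rewrite compVl. apply compI_l; auto. Qed.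
Lemma compKV (f g : Mor G) : cod g = cod f -> comp f (comp (minv f) g) = g.
Proof. intro H. rewrite compA by dc_solve. rewrite compVr. apply compI_l; auto. Qed.
Lemma comp_cancel_l (f f' g : Mor G) : cod f = dom g -> cod f' = dom g ->
  comp g f = comp g f' -> f = f'.
Proof.
  intros H1 H2 H. rewrite <- (compVK g f), <- (compVK g f') by auto. rewrite H; reflexivity.
Qed.

Lemma minv_unique (f k : Mor G) : cod k = dom f -> comp f k = idm (cod f) -> k = minv f.
Proof.
  intros H1 H2. rewrite <- (compI_r (minv f) (cod f)) by dc_solve.
  rewrite <- H2, compVK; auto.
Qed.
Lemma minv_id (x : Ob G) : minv (idm x) = idm x.
Proof. symmetry. apply minv_unique; [dc_solve|]. rewrite compI_l; dc_solve. Qed.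
Lemma minv_comp (f g : Mor G) : cod f = dom g -> minv (comp g f) = comp (minv f) (minv g).
Proof.
  intro H. symmetry. apply minv_unique; [dc_solve|].
  rewrite <- compA by dc_solve. rewrite compKV by dc_solve. rewrite compVr. f_equal. dc_solve.
Qed.
Lemma minv_tensm (f g : Mor G) : minv (tensm f g) = tensm (minv f) (minv g).
Proof.
  symmetry. apply minv_unique; [dc_solve|].
  rewrite <- interchange by dc_solve. rewrite !compVr, tensmI. f_equal. dc_solve.
Qed.

Lemma tensm_split_l (f g : Mor G) :
  tensm f g = comp (tensm f (idm (cod g))) (tensm (idm (dom f)) g).
Proof. rewrite <- interchange by dc_solve. rewrite compI_r, compI_l; auto. Qed.
Lemma tensm_split_r (f g : Mor G) :
  tensm f g = comp (tensm (idm (cod f)) g) (tensm f (idm (dom g))).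
Proof. rewrite <- interchange by dc_solve. rewrite compI_r, compI_l; auto. Qed.
Lemma interchange_comp (a b c d r : Mor G) :
  cod c = dom a -> cod d = dom b -> cod r = tens (dom c) (dom d) ->
  comp (tensm a b) (comp (tensm c d) r) = comp (tensm (comp a c) (comp b d)) r.
Proof. intros. rewrite compA by dc_solve. rewrite <- interchange by auto. reflexivity. Qed.

Lemma tensm_dom1_l (f g : Mor G) : dom f = e -> tensm f g = comp (tensm f (idm (cod g))) g.
Proof. intro H. rewrite tensm_split_l, H, tensm1l. reflexivity. Qed.
Lemma tensm_cod1_l (f g : Mor G) : cod f = e -> tensm f g = comp g (tensm f (idm (dom g))).
Proof. intro H. rewrite tensm_split_r, H, tensm1l. reflexivity. Qed.
Lemma tensm_dom1_r (f g : Mor G) : dom g = e -> tensm f g = comp (tensm (idm (cod f)) g) f.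
Proof. intro H. rewrite tensm_split_r, H, tensm1r. reflexivity. Qed.

Lemma eckmann_hilton (a b : Mor G) :
  dom a = e -> cod a = e -> dom b = e -> cod b = e -> comp a b = comp b a.
Proof.
  intros Ha Ha' Hb Hb'.
  transitivity (tensm a b).
  - rewrite tensm_dom1_l by auto. rewrite Hb', tensm1r. reflexivity.
  - rewrite tensm_dom1_r by auto. rewrite Ha', tensm1l. reflexivity.
Qed.

Lemma unit_aut_central (a m : Mor G) : dom a = e -> cod a = e ->
  comp (tensm a (idm (cod m))) m = comp m (tensm a (idm (dom m))).
Proof. intros. rewrite <- tensm_dom1_l, <- tensm_cod1_l; auto. Qed.

(* Whiskering by an identity is injective, since objects are invertible. *)
Lemma tensm_idm_cancel (f f' : Mor G) (x : Ob G) : tensm f (idm x) = tensm f' (idm x) -> f = f'.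
Proof.
  intro H.
  rewrite <- (tensm1r f), <- (tensm1r f'), <- (tensVr _ HG x), <- tensmI, <- !tensmA, H.
  reflexivity.
Qed.

Lemma iso_refl (x : Ob G) : iso x x.
Proof. exists (idm x); split; dc_solve. Qed.
Lemma iso_sym (x y : Ob G) : iso x y -> iso y x.
Proof. intros [f [H1 H2]]; exists (minv f); split; dc_solve. Qed.
Lemma iso_tensor (x x' y y' : Ob G) : iso x x' -> iso y y' -> iso (tens x y) (tens x' y').
Proof. intros [f [H1 H2]] [g [H3 H4]]; exists (tensm f g); split; dc_solve. Qed.

End Morphisms.

Global Hint Rewrite tensmA tensmI tensmIA tensm1l tensm1r using assumption : tensm_simpl.
Ltac tens_norm := autorewrite with tensm_simpl domcod tens_simpl.
Ltac comp_nest := repeat (rewrite <- compA by dc_solve).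

(* Since psi x y : e -> s[x](x)s[y](x)s[xy]^-1,
   the whiskered morphism Phi x y : s[xy] -> s[x](x)s[y] carries the same
   information, and the twisted cocycle identity for psi is equivalent to the
   plain associativity identity for Phi. *)
Section Untwisting.
Variable G : TwoGroupData.
Hypothesis HG : IsStrict2Group G.
Local Notation e := (unit G).
Variable s : Ob G -> Ob G.
Variable psi : Ob G -> Ob G -> Mor G.
Hypothesis psi_dom : forall x y, dom (psi x y) = e.
Hypothesis psi_cod : forall x y, cod (psi x y) = shat s x y.
Let psi_cod' x y : cod (psi x y) = tens (tens (s x) (s y)) (oinv (s (tens x y))).
Proof. apply psi_cod. Qed.
Hint Rewrite psi_dom psi_cod' : domcod.

Definition Phi (x y : Ob G) : Mor G := tensm (psi x y) (idm (s (tens x y))).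

Lemma Phi_dom x y : dom (Phi x y) = s (tens x y).
Proof. unfold Phi. dc_solve. Qed.
Lemma Phi_cod x y : cod (Phi x y) = tens (s x) (s y).
Proof. unfold Phi. dc_solve. Qed.

(* Both sides of the associativity identity for Phi are the corresponding
   sides of the twisted cocycle identity, whiskered by id_{s[xyz]}. *)
Lemma Phi_assoc_lhs x y z :
  comp (tensm (Phi x y) (idm (s z))) (Phi (tens x y) z)
  = tensm (tensm (psi x y) (psi (tens x y) z)) (idm (s (tens (tens x y) z))).
Proof.
  transitivity (tensm (psi x y) (Phi (tens x y) z)).
  - rewrite (tensm_dom1_l _ HG (psi x y) (Phi (tens x y) z)) by dc_solve.
    f_equal. unfold Phi at 1. rewrite tensmA, tensmI by auto. f_equal. f_equal.
    unfold Phi. dc_solve.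
  - unfold Phi. rewrite tensmA by auto. reflexivity.
Qed.

Lemma Phi_assoc_rhs x y z :
  comp (tensm (idm (s x)) (Phi y z)) (Phi x (tens y z))
  = tensm (tensm (lact s x (psi y z)) (psi x (tens y z))) (idm (s (tens x (tens y z)))).
Proof.
  transitivity (tensm (lact s x (psi y z)) (Phi x (tens y z))).
  - rewrite (tensm_dom1_l _ HG (lact s x (psi y z)) (Phi x (tens y z)))
      by (unfold lact; dc_solve).
    f_equal. unfold lact, Phi at 2. rewrite !tensmA, tensmI by auto.
    unfold Phi. f_equal. f_equal. f_equal. dc_solve.
  - unfold Phi. rewrite tensmA by auto. reflexivity.
Qed.

Lemma cocycle_psi_phi x y z :
  tensm (psi x y) (psi (tens x y) z) = tensm (lact s x (psi y z)) (psi x (tens y z))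
  <-> comp (tensm (Phi x y) (idm (s z))) (Phi (tens x y) z)
      = comp (tensm (idm (s x)) (Phi y z)) (Phi x (tens y z)).
Proof.
  rewrite Phi_assoc_lhs, Phi_assoc_rhs, (tensA _ HG x y z).
  split; intro H.
  - rewrite H; reflexivity.
  - eapply tensm_idm_cancel; eauto.
Qed.

End Untwisting.

Arguments Phi {G} s psi x y.

Lemma assoc_minv (G : TwoGroupData) (HG : IsStrict2Group G) (I : Type)
  (m : I -> I -> I) (s : I -> Ob G) (M : I -> I -> Mor G)
  (M_dom : forall g h, dom (M g h) = tens (s g) (s h))
  (M_cod : forall g h, cod (M g h) = s (m g h)) (g h k : I) :
  comp (M (m g h) k) (tensm (M g h) (idm (s k)))
  = comp (M g (m h k)) (tensm (idm (s g)) (M h k)) ->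
  comp (tensm (minv (M g h)) (idm (s k))) (minv (M (m g h) k))
  = comp (tensm (idm (s g)) (minv (M h k))) (minv (M g (m h k))).
Proof.
  intro H. apply (f_equal minv) in H.
  rewrite !minv_comp in H by (rewrite ?domT, ?codT, ?M_dom, ?M_cod, ?domI, ?codI by auto; auto).
  rewrite !minv_tensm, !minv_id in H by auto. exact H.
Qed.

Definition twisted_cocycle_data (G : TwoGroupData) (s : Ob G -> Ob G)
  (psi : Ob G -> Ob G -> Mor G) : Prop :=
  (forall x y : Ob G, iso x y -> s x = s y) /\
  (forall x : Ob G, iso (s x) x) /\
  s (unit G) = unit G /\
  (forall x x' y y' : Ob G, iso x y -> iso x' y' -> psi x x' = psi y y') /\
  (forall x x' : Ob G, dom (psi x x') = unit G /\ cod (psi x x') = shat s x x') /\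
  (forall x : Ob G, psi (unit G) x = idm (unit G) /\ psi x (unit G) = idm (unit G)) /\
  (forall x x' x'' : Ob G,
      tensm (psi x x') (psi (tens x x') x'')
      = tensm (lact s x (psi x' x'')) (psi x (tens x' x''))).
Arguments twisted_cocycle_data {G} s psi.

(* The objects
   normal_ob h := F h (x) F(e)^-1 inherit from the structure maps of F a family
   normal_mu g h : normal_ob g (x) normal_ob h -> normal_ob (g h) that is
   associative and strictly unital (F itself is only unital up to the
   morphism feps F : e -> F e). *)
Section NormalizedFunctor.
Variables H G : TwoGroupData.
Hypothesis HG : IsStrict2Group G.
Hypothesis H_assoc : forall x y z : Ob H, tens x (tens y z) = tens (tens x y) z.
Hypothesis H_unit_l : forall x : Ob H, tens (unit H) x = x.
Hypothesis H_unit_r : forall x : Ob H, tens x (unit H) = x.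
Variable F : MonFunData H G.
Hypothesis HF : IsMonFun F.
Local Notation u := (fo F (unit H)).
Local Notation eps := (feps F).
Local Notation mu := (fmu F).

Let eps_dom : dom eps = unit G. Proof. apply (mf_eps_dom HF). Qed.
Let eps_cod : cod eps = u. Proof. apply (mf_eps_cod HF). Qed.
Let mu_dom g h : dom (mu g h) = tens (fo F g) (fo F h). Proof. apply (mf_mu_dom HF). Qed.
Let mu_cod g h : cod (mu g h) = fo F (tens g h). Proof. apply (mf_mu_cod HF). Qed.
Hint Rewrite eps_dom eps_cod mu_dom mu_cod : domcod.

Definition normal_ob (h : Ob H) : Ob G := tens (fo F h) (oinv u).

Definition normal_iso (h : Ob H) : Mor G := tensm (idm (fo F h)) (tensm (idm (oinv u)) eps).

Lemma normal_iso_dom h : dom (normal_iso h) = normal_ob h.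
Proof. unfold normal_iso, normal_ob; dc_solve. Qed.
Lemma normal_iso_cod h : cod (normal_iso h) = fo F h.
Proof. unfold normal_iso; dc_solve. Qed.
Hint Rewrite normal_iso_dom normal_iso_cod : domcod.

Lemma normal_iso_unit : normal_iso (unit H) = eps.
Proof. unfold normal_iso. tens_norm. reflexivity. Qed.

Definition normal_mu (g h : Ob H) : Mor G :=
  comp (minv (normal_iso (tens g h))) (comp (mu g h) (tensm (normal_iso g) (normal_iso h))).

Lemma normal_mu_dom g h : dom (normal_mu g h) = tens (normal_ob g) (normal_ob h).
Proof. unfold normal_mu; dc_solve. Qed.
Lemma normal_mu_cod g h : cod (normal_mu g h) = normal_ob (tens g h).
Proof. unfold normal_mu; dc_solve. Qed.
Hint Rewrite normal_mu_dom normal_mu_cod : domcod.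

(* Both sides of the associativity identity for normal_mu are conjugates of
   the corresponding sides of the associativity identity of F. *)
Lemma normal_mu_assoc_lhs g h k :
  comp (normal_mu (tens g h) k) (tensm (normal_mu g h) (idm (normal_ob k)))
  = comp (minv (normal_iso (tens (tens g h) k)))
      (comp (comp (mu (tens g h) k) (tensm (mu g h) (idm (fo F k))))
            (tensm (tensm (normal_iso g) (normal_iso h)) (normal_iso k))).
Proof.
  unfold normal_mu. comp_nest. rewrite <- interchange by dc_solve.
  rewrite compKV, compI_r by dc_solve. f_equal. f_equal.
  rewrite <- interchange by dc_solve. rewrite compI_l by dc_solve. reflexivity.
Qed.
Lemma normal_mu_assoc_rhs g h k :
  comp (normal_mu g (tens h k)) (tensm (idm (normal_ob g)) (normal_mu h k))
  = comp (minv (normal_iso (tens g (tens h k))))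
      (comp (comp (mu g (tens h k)) (tensm (idm (fo F g)) (mu h k)))
            (tensm (normal_iso g) (tensm (normal_iso h) (normal_iso k)))).
Proof.
  unfold normal_mu. comp_nest. rewrite <- interchange by dc_solve.
  rewrite compKV, compI_r by dc_solve. f_equal. f_equal.
  rewrite <- interchange by dc_solve. rewrite compI_l by dc_solve. reflexivity.
Qed.

Lemma normal_mu_assoc g h k :
  comp (normal_mu (tens g h) k) (tensm (normal_mu g h) (idm (normal_ob k)))
  = comp (normal_mu g (tens h k)) (tensm (idm (normal_ob g)) (normal_mu h k)).
Proof.
  rewrite normal_mu_assoc_lhs, normal_mu_assoc_rhs, H_assoc, tensmA by auto.
  rewrite (mf_assoc HF g h k). reflexivity.
Qed.

Lemma normal_mu_unit_l h : normal_mu (unit H) h = idm (normal_ob h).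
Proof.
  unfold normal_mu. rewrite H_unit_l, normal_iso_unit.
  rewrite (tensm_dom1_l _ HG eps (normal_iso h)) by dc_solve. rewrite normal_iso_cod.
  rewrite (compA _ HG (normal_iso h) (tensm eps (idm (fo F h))) (mu (unit H) h)) by dc_solve.
  rewrite (mf_unit_l HF h), compI_l, compVl by dc_solve. rewrite normal_iso_dom. reflexivity.
Qed.
Lemma normal_mu_unit_r h : normal_mu h (unit H) = idm (normal_ob h).
Proof.
  unfold normal_mu. rewrite H_unit_r, normal_iso_unit.
  rewrite (tensm_dom1_r _ HG (normal_iso h) eps) by dc_solve. rewrite normal_iso_cod.
  rewrite (compA _ HG (normal_iso h) (tensm (idm (fo F h)) eps) (mu h (unit H))) by dc_solve.
  rewrite (mf_unit_r HF h), compI_l, compVl by dc_solve. rewrite normal_iso_dom. reflexivity.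
Qed.

End NormalizedFunctor.

Arguments normal_ob {H G} F h.
Arguments normal_iso {H G} F h.
Arguments normal_mu {H G} F g h.

Section Necessity.
Variable G : TwoGroupData.
Hypothesis HG : IsStrict2Group G.
Local Notation e := (unit G).
Variable Pi : Group.
Variable A : GModule Pi.
Local Notation E := (elementary A).
Variable F : MonFunData G E.
Variable F' : MonFunData E G.
Variable a : Ob G -> Mor G.
Hypothesis HF : IsMonFun F.
Hypothesis HF' : IsMonFun F'.
Hypothesis Ha : IsMonNat (mfcomp F F') (mfid G) a.

Lemma F_iso x y : iso x y -> fo F x = fo F y.
Proof.
  intros [f [<- <-]]. pose proof (mf_dom HF f). pose proof (mf_cod HF f).
  simpl in *. congruence.
Qed.
Lemma F_tens x y : fo F (tens x y) = gmul Pi (fo F x) (fo F y).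
Proof. pose proof (mf_mu_dom HF x y). pose proof (mf_mu_cod HF x y). simpl in *. congruence. Qed.
Lemma F_unit : fo F e = gone Pi.
Proof.
  pose proof (F_tens e e) as H. rewrite (tens1l _ HG) in H.
  rewrite <- (gmul1l Pi (fo F e)) at 1. rewrite <- (gmulVl Pi (fo F e)) at 1.
  rewrite <- gmulA, <- H. apply gmulVl.
Qed.

Local Notation sn := (normal_ob F').
Local Notation Mn := (normal_mu F').
Let Mn_dom g h : dom (Mn g h) = tens (sn g) (sn h).
Proof. apply (normal_mu_dom _ _ HG _ HF'). Qed.
Let Mn_cod g h : cod (Mn g h) = sn (gmul Pi g h).
Proof. apply (normal_mu_cod _ _ HG _ HF'). Qed.
Let Mn_assoc g h k :
  comp (Mn (gmul Pi g h) k) (tensm (Mn g h) (idm (sn k)))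
  = comp (Mn g (gmul Pi h k)) (tensm (idm (sn g)) (Mn h k)).
Proof. apply (normal_mu_assoc E G HG (gmulA Pi) _ HF'). Qed.
Hint Rewrite Mn_dom Mn_cod : domcod.

(* The section s[x] := F'(F x) (x) F'(1)^-1 and the lifting psi obtained by
   twisting the inverse structure maps. *)
Definition split_section (x : Ob G) : Ob G := sn (fo F x).
Definition split_lifting (x y : Ob G) : Mor G :=
  tensm (minv (Mn (fo F x) (fo F y))) (idm (oinv (sn (gmul Pi (fo F x) (fo F y))))).

Lemma split_lifting_dom x y : dom (split_lifting x y) = e.
Proof. unfold split_lifting. dc_solve. Qed.
Lemma split_lifting_cod x y : cod (split_lifting x y) = shat split_section x y.
Proof. unfold split_lifting, shat, split_section. rewrite F_tens. dc_solve. Qed.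

Lemma split_section_iso x : iso (split_section x) x.
Proof.
  exists (comp (a x) (normal_iso F' (fo F x))).
  pose proof (mn_dom Ha x). pose proof (mn_cod Ha x).
  pose proof (normal_iso_dom _ _ HG _ HF' (fo F x)). pose proof (normal_iso_cod _ _ HG _ HF' (fo F x)).
  simpl in *. split; dc_solve.
Qed.

Lemma split_Phi x y :
  Phi split_section split_lifting x y = minv (Mn (fo F x) (fo F y)).
Proof. unfold Phi, split_lifting, split_section. rewrite F_tens. tens_norm. reflexivity. Qed.

Lemma split_twisted_cocycle : twisted_cocycle_data split_section split_lifting.
Proof.
  refine (conj _ (conj _ (conj _ (conj _ (conj _ (conj _ _)))))).
  - intros x y H. unfold split_section. rewrite (F_iso x y H). reflexivity.
  - exact split_section_iso.
  - unfold split_section, normal_ob. rewrite F_unit. apply tensVr; auto.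
  - intros x x' y y' H H'. unfold split_lifting. rewrite (F_iso x y H), (F_iso x' y' H'). reflexivity.
  - intros x y. split; [apply split_lifting_dom | apply split_lifting_cod].
  - intro x. unfold split_lifting.
    rewrite F_unit, (normal_mu_unit_l E G HG (gmul1l Pi) _ HF'), (normal_mu_unit_r E G HG (gmul1r Pi) _ HF').
    rewrite (gmul1l Pi), (gmul1r Pi), minv_id by auto. split; tens_norm; reflexivity.
  - intros x y z.
    apply (proj2 (cocycle_psi_phi _ HG _ _ split_lifting_dom split_lifting_cod x y z)).
    rewrite !split_Phi, !F_tens. unfold split_section.
    apply (assoc_minv _ HG _ _ _ _ Mn_dom Mn_cod), Mn_assoc.
Qed.

End Necessity.

Lemma split_has_cocycle (G : TwoGroupData) (HG : IsStrict2Group G) :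
  is_split G -> exists (s : Ob G -> Ob G) psi, twisted_cocycle_data s psi.
Proof.
  intros [Pi [A [F [F' [HF [HF' [[a Ha] _]]]]]]].
  eexists; eexists; eapply split_twisted_cocycle; eauto.
Qed.

(* The automorphisms of the unit, Aut(e) = pi_1(G), as a type with
   composition as (commutative, by Eckmann-Hilton) group law; conjugation
   x |-> id_x (x) a (x) id_{x^-1} depends only on the class of x.  An
   automorphism u of any object P is turned into one of e by whiskering with
   id_{P^-1} ([untwist]); whiskering back with id_P recovers u. *)
Section UnitAutomorphisms.
Variable G : TwoGroupData.
Hypothesis HG : IsStrict2Group G.
Local Notation e := (unit G).

Definition Pi1 : Type := {f : Mor G | dom f = e /\ cod f = e}.

(* Total coercion of a morphism into Pi1 (with junk value id_e outside). *)
Definition to_pi1 (f : Mor G) : Pi1 :=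
  match excluded_middle_informative (dom f = e /\ cod f = e) with
  | left p => exist _ f p
  | right _ => exist _ (idm e) (conj (domI _ HG e) (codI _ HG e))
  end.

Lemma to_pi1_val f : dom f = e -> cod f = e -> proj1_sig (to_pi1 f) = f.
Proof. intros. unfold to_pi1; destruct excluded_middle_informative; simpl; tauto. Qed.
Lemma Pi1_eq (a b : Pi1) : proj1_sig a = proj1_sig b -> a = b.
Proof. destruct a, b; simpl; intros ->; f_equal; apply proof_irrelevance. Qed.
Lemma pi1_dom (a : Pi1) : dom (proj1_sig a) = e. Proof. exact (proj1 (proj2_sig a)). Qed.
Lemma pi1_cod (a : Pi1) : cod (proj1_sig a) = e. Proof. exact (proj2 (proj2_sig a)). Qed.
Hint Rewrite pi1_dom pi1_cod : domcod.

Definition conj_by (x : Ob G) (f : Mor G) : Mor G := tensm (tensm (idm x) f) (idm (oinv x)).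
Lemma conj_by_dom x f : dom (conj_by x f) = tens x (tens (dom f) (oinv x)).
Proof. unfold conj_by; dc_solve. Qed.
Lemma conj_by_cod x f : cod (conj_by x f) = tens x (tens (cod f) (oinv x)).
Proof. unfold conj_by; dc_solve. Qed.
Hint Rewrite conj_by_dom conj_by_cod : domcod.

Definition pi1_add (a b : Pi1) : Pi1 := to_pi1 (comp (proj1_sig a) (proj1_sig b)).
Definition pi1_zero : Pi1 := to_pi1 (idm e).
Definition pi1_opp (a : Pi1) : Pi1 := to_pi1 (minv (proj1_sig a)).
Definition pi1_conj (x : Ob G) (a : Pi1) : Pi1 := to_pi1 (conj_by x (proj1_sig a)).

Lemma val_pi1_add a b : proj1_sig (pi1_add a b) = comp (proj1_sig a) (proj1_sig b).
Proof. apply to_pi1_val; dc_solve. Qed.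
Lemma val_pi1_zero : proj1_sig pi1_zero = idm e.
Proof. apply to_pi1_val; dc_solve. Qed.
Lemma val_pi1_opp a : proj1_sig (pi1_opp a) = minv (proj1_sig a).
Proof. apply to_pi1_val; dc_solve. Qed.
Lemma val_pi1_conj x a : proj1_sig (pi1_conj x a) = conj_by x (proj1_sig a).
Proof. apply to_pi1_val; dc_solve. Qed.

Lemma pi1_addA a b c : pi1_add a (pi1_add b c) = pi1_add (pi1_add a b) c.
Proof. apply Pi1_eq. rewrite !val_pi1_add. apply compA; dc_solve. Qed.
Lemma pi1_addC a b : pi1_add a b = pi1_add b a.
Proof. apply Pi1_eq. rewrite !val_pi1_add. apply eckmann_hilton; dc_solve. Qed.
Lemma pi1_add0 a : pi1_add a pi1_zero = a.
Proof. apply Pi1_eq. rewrite val_pi1_add, val_pi1_zero. apply compI_r; dc_solve. Qed.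
Lemma pi1_add0l a : pi1_add pi1_zero a = a.
Proof. rewrite pi1_addC. apply pi1_add0. Qed.
Lemma pi1_addN a : pi1_add a (pi1_opp a) = pi1_zero.
Proof.
  apply Pi1_eq. rewrite val_pi1_add, val_pi1_opp, val_pi1_zero, compVr by auto. f_equal; dc_solve.
Qed.

Lemma pi1_conjD x a b : pi1_conj x (pi1_add a b) = pi1_add (pi1_conj x a) (pi1_conj x b).
Proof.
  apply Pi1_eq. rewrite !val_pi1_add, !val_pi1_conj, val_pi1_add. unfold conj_by.
  rewrite <- !interchange by dc_solve. rewrite !idm_comp_idm by auto. reflexivity.
Qed.
Lemma pi1_conj0 x : pi1_conj x pi1_zero = pi1_zero.
Proof. apply Pi1_eq. rewrite val_pi1_conj, val_pi1_zero. unfold conj_by. tens_norm. reflexivity. Qed.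
Lemma pi1_conj_unit a : pi1_conj e a = a.
Proof. apply Pi1_eq. rewrite val_pi1_conj. unfold conj_by. tens_norm. reflexivity. Qed.
Lemma pi1_conj_tens x y a : pi1_conj (tens x y) a = pi1_conj x (pi1_conj y a).
Proof. apply Pi1_eq. rewrite !val_pi1_conj. unfold conj_by. tens_norm. reflexivity. Qed.

(* Conjugation by isomorphic objects agrees: for phi : x -> y, the morphism
   phi (x) a (x) rho, with rho := id_{y^-1} (x) phi^-1 (x) id_{x^-1} : x^-1 -> y^-1,
   equals c o conj_by x a and conj_by y a o c for the automorphism
   c := phi (x) rho of e; cancel c using Eckmann-Hilton. *)
Lemma conj_by_iso x y a : iso x y -> dom a = e -> cod a = e -> conj_by x a = conj_by y a.
Proof.
  intros [phi [Hphi_dom Hphi_cod]] Ha_dom Ha_cod.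
  set (rho := tensm (tensm (idm (oinv y)) (minv phi)) (idm (oinv x))).
  assert (rho_dom : dom rho = oinv x) by (unfold rho; dc_solve).
  assert (rho_cod : cod rho = oinv y) by (unfold rho; dc_solve).
  set (c := tensm phi rho).
  assert (c_dom : dom c = e) by (unfold c; dc_solve).
  assert (c_cod : cod c = e) by (unfold c; dc_solve).
  assert (Hx : tensm (tensm phi a) rho = comp c (conj_by x a)).
  { unfold c, conj_by. rewrite <- (tensm1r _ HG phi) at 2.
    rewrite <- !interchange by dc_solve. rewrite compI_r, compI_l, compI_r by dc_solve.
    reflexivity. }
  assert (Hy : tensm (tensm phi a) rho = comp (conj_by y a) c).
  { unfold c, conj_by. rewrite <- (tensm1r _ HG phi) at 2.
    rewrite <- !interchange by dc_solve. rewrite compI_l, compI_r, compI_l by dc_solve.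
    reflexivity. }
  apply (comp_cancel_l _ HG _ _ c); try dc_solve.
  rewrite <- Hx, Hy. apply eckmann_hilton; auto; dc_solve.
Qed.
Lemma pi1_conj_iso x y a : iso x y -> pi1_conj x a = pi1_conj y a.
Proof. intro Hxy. apply Pi1_eq. rewrite !val_pi1_conj. apply conj_by_iso; dc_solve. Qed.

(* Whiskering by an identity: injective, additive, and invariant under
   conjugation by any morphism (automorphisms of e are central). *)
Lemma Pi1_eq_whisker (a b : Pi1) P :
  tensm (proj1_sig a) (idm P) = tensm (proj1_sig b) (idm P) -> a = b.
Proof. intro H. apply Pi1_eq. eapply tensm_idm_cancel; eauto. Qed.
Lemma whisker_comp a b P : dom a = e -> cod a = e -> dom b = e -> cod b = e ->
  tensm (comp a b) (idm P) = comp (tensm a (idm P)) (tensm b (idm P)).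
Proof. intros. rewrite <- interchange by dc_solve. rewrite idm_comp_idm; auto. Qed.
Lemma whisker_pi1_add a b P : tensm (proj1_sig (pi1_add a b)) (idm P)
  = comp (tensm (proj1_sig a) (idm P)) (tensm (proj1_sig b) (idm P)).
Proof. rewrite val_pi1_add. apply whisker_comp; dc_solve. Qed.
Lemma whisker_conj a m : dom a = e -> cod a = e ->
  tensm a (idm (dom m)) = comp (minv m) (comp (tensm a (idm (cod m))) m).
Proof. intros. rewrite unit_aut_central by auto. rewrite compVK by dc_solve. reflexivity. Qed.

Definition untwist (u : Mor G) : Pi1 := to_pi1 (tensm u (idm (oinv (dom u)))).

Lemma val_untwist u : cod u = dom u -> proj1_sig (untwist u) = tensm u (idm (oinv (dom u))).
Proof. intro. apply to_pi1_val; dc_solve. Qed.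
Lemma untwist_idm x : untwist (idm x) = pi1_zero.
Proof. apply Pi1_eq. rewrite val_pi1_zero, val_untwist by dc_solve. tens_norm. reflexivity. Qed.
Lemma whisker_untwist u P : cod u = dom u -> dom u = P -> tensm (proj1_sig (untwist u)) (idm P) = u.
Proof. intros H1 H2. rewrite val_untwist by auto. subst. tens_norm. reflexivity. Qed.
Lemma whisker_untwist_tens u Z : cod u = dom u ->
  tensm (proj1_sig (untwist u)) (idm (tens (dom u) Z)) = tensm u (idm Z).
Proof. intro. rewrite val_untwist by auto. tens_norm. reflexivity. Qed.

Lemma whisker_conj_untwist u Z W : cod u = dom u -> dom u = W ->
  tensm (proj1_sig (pi1_conj Z (untwist u))) (idm (tens Z W)) = tensm (idm Z) u.
Proof.
  intros Hu <-. rewrite val_pi1_conj, val_untwist by auto. unfold conj_by. tens_norm.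
  reflexivity.
Qed.

Lemma whisker_pi1_pair a b Z Y :
  tensm (proj1_sig (pi1_add a (pi1_conj Z b))) (idm (tens Z Y))
  = tensm (tensm (proj1_sig a) (idm Z)) (tensm (proj1_sig b) (idm Y)).
Proof.
  symmetry. rewrite whisker_pi1_add, val_pi1_conj. unfold conj_by. tens_norm.
  rewrite (tensm_dom1_l _ HG (proj1_sig a)) by dc_solve. f_equal. f_equal. f_equal. dc_solve.
Qed.
Lemma whisker_untwist_pair u v Z : cod u = dom u -> cod v = dom v -> Z = dom u ->
  tensm (proj1_sig (pi1_add (untwist u) (pi1_conj Z (untwist v))))
        (idm (tens (dom u) (dom v)))
  = tensm u v.
Proof.
  intros Hu Hv ->. rewrite whisker_pi1_pair, !whisker_untwist by auto. reflexivity.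
Qed.

End UnitAutomorphisms.

Arguments to_pi1 {G} HG f.
Arguments pi1_add {G} HG a b.
Arguments pi1_zero {G} HG.
Arguments pi1_opp {G} HG a.
Arguments pi1_conj {G} HG x a.
Arguments untwist {G} HG u.
Global Hint Rewrite pi1_dom pi1_cod conj_by_dom conj_by_cod using assumption : domcod.

(* A normalized section s of pi_0 realises pi_0(G) as the group Pi0 of
   objects fixed by s, acting on Aut(e) by conjugation.  Choosing
   isomorphisms kappa x : s x -> x (identities on fixed points), every
   morphism f is transported to [straighten f] : s (dom f) -> s (cod f). *)
Section Sufficiency.
Variable G : TwoGroupData.
Hypothesis HG : IsStrict2Group G.
Local Notation e := (unit G).
Variable s : Ob G -> Ob G.
Hypothesis s_iso : forall x y, iso x y -> s x = s y.
Hypothesis s_sec : forall x, iso (s x) x.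
Hypothesis s_unit : s e = e.

Lemma s_idem x : s (s x) = s x. Proof. apply s_iso, s_sec. Qed.
Lemma s_tens_l x y : s (tens (s x) y) = s (tens x y).
Proof. apply s_iso, (iso_tensor _ HG); [apply s_sec | apply (iso_refl _ HG)]. Qed.
Lemma s_tens_r x y : s (tens x (s y)) = s (tens x y).
Proof. apply s_iso, (iso_tensor _ HG); [apply (iso_refl _ HG) | apply s_sec]. Qed.
Lemma s_cod_dom f : s (cod f) = s (dom f).
Proof. symmetry; apply s_iso. exists f; auto. Qed.
Hint Rewrite s_idem s_cod_dom : tens_simpl.

Definition Pi0 : Type := {x : Ob G | s x = x}.
Definition cls (x : Ob G) : Pi0 := exist _ (s x) (s_idem x).
Arguments cls : simpl never.

Lemma Pi0_eq (g h : Pi0) : proj1_sig g = proj1_sig h -> g = h.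
Proof. destruct g, h; simpl; intros ->; f_equal; apply proof_irrelevance. Qed.
Lemma val_cls x : proj1_sig (cls x) = s x. Proof. reflexivity. Qed.
Lemma pi0_fix (g : Pi0) : s (proj1_sig g) = proj1_sig g. Proof. exact (proj2_sig g). Qed.
Lemma cls_val g : cls (proj1_sig g) = g.
Proof. apply Pi0_eq; destruct g; simpl; auto. Qed.
Lemma cls_iso x y : iso x y -> cls x = cls y.
Proof. intro; apply Pi0_eq; simpl; auto. Qed.

Definition pi0_mul (g h : Pi0) : Pi0 := cls (tens (proj1_sig g) (proj1_sig h)).
Definition pi0_one : Pi0 := cls e.
Definition pi0_inv (g : Pi0) : Pi0 := cls (oinv (proj1_sig g)).

Lemma val_pi0_mul g h : proj1_sig (pi0_mul g h) = s (tens (proj1_sig g) (proj1_sig h)).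
Proof. reflexivity. Qed.
Lemma val_pi0_one : proj1_sig pi0_one = e. Proof. exact s_unit. Qed.
Lemma cls_mul x y : pi0_mul (cls x) (cls y) = cls (tens x y).
Proof. apply Pi0_eq; simpl. rewrite s_tens_l, s_tens_r; auto. Qed.
Lemma pi0_mulA x y z : pi0_mul x (pi0_mul y z) = pi0_mul (pi0_mul x y) z.
Proof.
  rewrite <- (cls_val x), <- (cls_val y), <- (cls_val z), !cls_mul, tensA; auto.
Qed.
Lemma pi0_mul1l x : pi0_mul pi0_one x = x.
Proof. apply Pi0_eq; destruct x as [x Hx]; simpl. rewrite s_unit, tens1l; auto. Qed.
Lemma pi0_mul1r x : pi0_mul x pi0_one = x.
Proof. apply Pi0_eq; destruct x as [x Hx]; simpl. rewrite s_unit, tens1r; auto. Qed.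
Lemma pi0_mulVl x : pi0_mul (pi0_inv x) x = pi0_one.
Proof. apply Pi0_eq; destruct x as [x Hx]; simpl. rewrite s_tens_l, tensVl; auto. Qed.
Lemma pi0_mulVr x : pi0_mul x (pi0_inv x) = pi0_one.
Proof. apply Pi0_eq; destruct x as [x Hx]; simpl. rewrite s_tens_r, tensVr; auto. Qed.

Definition Pi0_group : Group :=
  {| gcar := Pi0; gmul := pi0_mul; gone := pi0_one; ginv := pi0_inv;
     gmulA := pi0_mulA; gmul1l := pi0_mul1l; gmul1r := pi0_mul1r;
     gmulVl := pi0_mulVl; gmulVr := pi0_mulVr |}.

Definition pi0_act (g : Pi0) (a : Pi1 G) : Pi1 G := pi1_conj HG (proj1_sig g) a.

Lemma pi0_act1 a : pi0_act pi0_one a = a.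
Proof. unfold pi0_act. rewrite val_pi0_one. apply (pi1_conj_unit _ HG). Qed.
Lemma pi0_actM g h a : pi0_act (pi0_mul g h) a = pi0_act g (pi0_act h a).
Proof.
  unfold pi0_act. rewrite val_pi0_mul, <- (pi1_conj_tens _ HG).
  apply (pi1_conj_iso _ HG), s_sec.
Qed.

Definition Pi1_module : GModule Pi0_group :=
  @Build_GModule Pi0_group (Pi1 G) (pi1_add HG) (pi1_zero HG) (pi1_opp HG)
    (pi1_addA _ HG) (pi1_addC _ HG) (pi1_add0 _ HG) (pi1_addN _ HG)
    pi0_act (fun g => pi1_conjD _ HG (proj1_sig g)) pi0_act1 pi0_actM.

Definition kappa0 (x : Ob G) : Mor G :=
  proj1_sig (constructive_indefinite_description _ (s_sec x)).
Lemma kappa0_dom x : dom (kappa0 x) = s x.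
Proof. unfold kappa0; destruct (constructive_indefinite_description _ _) as [f [H1 H2]]; exact H1. Qed.
Lemma kappa0_cod x : cod (kappa0 x) = x.
Proof. unfold kappa0; destruct (constructive_indefinite_description _ _) as [f [H1 H2]]; exact H2. Qed.
Hint Rewrite kappa0_dom kappa0_cod : domcod.

Definition kappa (x : Ob G) : Mor G := comp (kappa0 x) (minv (kappa0 (s x))).
Lemma kappa_dom x : dom (kappa x) = s x. Proof. unfold kappa; dc_solve. Qed.
Lemma kappa_cod x : cod (kappa x) = x. Proof. unfold kappa; dc_solve. Qed.
Hint Rewrite kappa_dom kappa_cod : domcod.
Lemma kappa_fix x : s x = x -> kappa x = idm x.
Proof. intro H. unfold kappa. rewrite H, compVr, kappa0_cod; auto. Qed.
Lemma kappa_unit : kappa e = idm e. Proof. apply kappa_fix, s_unit. Qed.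

Definition straighten (f : Mor G) : Mor G :=
  comp (minv (kappa (cod f))) (comp f (kappa (dom f))).
Lemma straighten_dom f : dom (straighten f) = s (dom f). Proof. unfold straighten; dc_solve. Qed.
Lemma straighten_cod f : cod (straighten f) = s (cod f). Proof. unfold straighten; dc_solve. Qed.
Hint Rewrite straighten_dom straighten_cod : domcod.

Lemma kappa_straighten f : comp (kappa (cod f)) (straighten f) = comp f (kappa (dom f)).
Proof. unfold straighten. rewrite compKV by dc_solve. reflexivity. Qed.
Lemma straighten_idm x : straighten (idm x) = idm (s x).
Proof.
  unfold straighten. rewrite domI, codI, compI_l, compVl by (auto; dc_solve). f_equal; dc_solve.
Qed.
Lemma straighten_comp f g : cod f = dom g -> straighten (comp g f) = comp (straighten g) (straighten f).
Proof.
  intro H. unfold straighten. rewrite domC, codC by auto. comp_nest. f_equal. f_equal.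
  rewrite <- H, compKV by dc_solve. reflexivity.
Qed.
Lemma straighten_whisker (a : Pi1 G) (g : Pi0) :
  straighten (tensm (proj1_sig a) (idm (proj1_sig g))) = tensm (proj1_sig a) (idm (proj1_sig g)).
Proof.
  unfold straighten.
  rewrite domT, codT, pi1_dom, pi1_cod, domI, codI, !tens1l, (kappa_fix (proj1_sig g)), minv_id
    by (auto using pi0_fix).
  rewrite compI_l, compI_r by dc_solve. reflexivity.
Qed.

(* From now on, phi x y : s[xy] -> s[x](x)s[y] is a normalized associative
   family, invariant under isomorphism (the untwisted form of psi). *)
Variable phi : Ob G -> Ob G -> Mor G.
Hypothesis phi_iso : forall x x' y y', iso x y -> iso x' y' -> phi x x' = phi y y'.
Hypothesis phi_dom : forall x y, dom (phi x y) = s (tens x y).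
Hypothesis phi_cod : forall x y, cod (phi x y) = tens (s x) (s y).
Hypothesis phi_unit_l : forall x, phi e x = idm (s x).
Hypothesis phi_unit_r : forall x, phi x e = idm (s x).
Hypothesis phi_assoc : forall x y z,
  comp (tensm (phi x y) (idm (s z))) (phi (tens x y) z)
  = comp (tensm (idm (s x)) (phi y z)) (phi x (tens y z)).
Hint Rewrite phi_dom phi_cod : domcod.

Lemma phi_s x y : phi (s x) (s y) = phi x y.
Proof. apply phi_iso; apply s_sec. Qed.
Lemma phi_s_l x y : phi (s x) y = phi x y.
Proof. apply phi_iso; [apply s_sec | apply (iso_refl _ HG)]. Qed.
Lemma phi_s_r x y : phi x (s y) = phi x y.
Proof. apply phi_iso; [apply (iso_refl _ HG) | apply s_sec]. Qed.

(* nu x y : the automorphism of s[xy] measuring how phi differs from the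
   tensor product of the chosen isomorphisms kappa. *)
Definition nu (x y : Ob G) : Mor G :=
  comp (minv (kappa (tens x y))) (comp (tensm (kappa x) (kappa y)) (phi x y)).
Lemma nu_dom x y : dom (nu x y) = s (tens x y). Proof. unfold nu; dc_solve. Qed.
Lemma nu_cod x y : cod (nu x y) = s (tens x y). Proof. unfold nu; dc_solve. Qed.
Hint Rewrite nu_dom nu_cod : domcod.
Lemma kappa_nu x y : comp (kappa (tens x y)) (nu x y) = comp (tensm (kappa x) (kappa y)) (phi x y).
Proof. unfold nu. rewrite compKV by dc_solve. reflexivity. Qed.

Local Notation Pi := Pi0_group.
Local Notation A := Pi1_module.
Local Notation E := (elementary A).

Hint Rewrite pi0_fix val_pi0_mul val_pi0_one val_cls : tens_simpl.

Definition Fcls : MonFunData G E :=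
  @Build_MonFunData G E cls
    (fun f : Mor G => ((untwist HG (straighten f), cls (dom f)) : Mor E))
    (fun x y => ((untwist HG (nu x y), cls (tens x y)) : Mor E))
    ((pi1_zero HG, pi0_one) : Mor E).

Definition Fsec : MonFunData E G :=
  @Build_MonFunData E G (fun g : Pi0 => proj1_sig g)
    (fun p : Mor E => tensm (proj1_sig (fst p : Pi1 G)) (idm (proj1_sig (snd p : Pi0))))
    (fun g h : Pi0 => minv (phi (proj1_sig g) (proj1_sig h)))
    (idm e).

(* Functoriality of Fcls: straightening is functorial, and untwisting turns
   composition of automorphisms into addition in Aut(e). *)
Lemma Fcls_comp f g : cod f = dom g -> fm Fcls (comp g f) = comp (fm Fcls g) (fm Fcls f).
Proof.
  intro H. cbn. rewrite domC by auto. f_equal.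
  apply (Pi1_eq_whisker _ HG _ _ (s (dom f))).
  rewrite whisker_pi1_add, !whisker_untwist; try dc_solve.
  1: apply straighten_comp; auto.
  all: rewrite ?straighten_dom, ?straighten_cod, ?domC, ?codC by auto; rewrite <- ?H;
       autorewrite with tens_simpl; rewrite <- ?H; autorewrite with tens_simpl; reflexivity.
Qed.

(* Whiskered by id_{s[xy]}, both
   sides become conjugates of kappa-transports of f (x) g by phi, which agree
   because phi only depends on isomorphism classes. *)
Lemma Fcls_mu_nat f g :
  comp (fmu Fcls (cod f) (cod g)) (tensm (fm Fcls f) (fm Fcls g))
  = comp (fm Fcls (tensm f g)) (fmu Fcls (dom f) (dom g)).
Proof.
  cbn. rewrite cls_mul. f_equal.
  apply (Pi1_eq_whisker _ HG _ _ (dom (phi (dom f) (dom g)))).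
  rewrite !whisker_pi1_add.
  rewrite (whisker_untwist _ HG (nu (dom f) (dom g))) by dc_solve.
  rewrite (whisker_untwist _ HG (straighten (tensm f g)));
    [ | rewrite straighten_cod, straighten_dom, s_cod_dom; auto
      | rewrite straighten_dom, phi_dom, domT; auto].
  rewrite (whisker_untwist _ HG (nu (cod f) (cod g)));
    [ | dc_solve | rewrite nu_dom, phi_dom, <- (codT _ HG f g), s_cod_dom, domT; auto].
  rewrite <- (whisker_pi1_add _ HG).
  rewrite (whisker_conj _ HG _ (phi (dom f) (dom g))) by dc_solve.
  rewrite phi_cod, <- (straighten_dom f), <- (straighten_dom g).
  unfold pi0_act. rewrite val_cls.
  rewrite whisker_untwist_pair; try (rewrite ?straighten_cod, ?straighten_dom, ?s_cod_dom; reflexivity).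
  assert (Hphi : phi (cod f) (cod g) = phi (dom f) (dom g)).
  { apply phi_iso; apply (iso_sym _ HG); [exists f | exists g]; split; reflexivity. }
  unfold nu. rewrite Hphi.
  unfold straighten at 3. rewrite domT, codT by auto.
  comp_nest. rewrite compKV by dc_solve. f_equal.
  rewrite (compA _ HG (phi (dom f) (dom g))) by dc_solve.
  rewrite <- interchange by dc_solve. rewrite !kappa_straighten.
  rewrite (compA _ HG (phi (dom f) (dom g))) by dc_solve.
  comp_nest. rewrite compKV by dc_solve.
  rewrite (compA _ HG (phi (dom f) (dom g))) by dc_solve. rewrite <- interchange by dc_solve.
  reflexivity.
Qed.

(* Associativity of the structure maps of Fcls, which is the associativity of
   phi transported along the isomorphisms kappa. *)
Lemma Fcls_assoc x y z :
  comp (fmu Fcls (tens x y) z) (tensm (fmu Fcls x y) (idm (fo Fcls z)))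
  = comp (fmu Fcls x (tens y z)) (tensm (idm (fo Fcls x)) (fmu Fcls y z)).
Proof.
  cbn. unfold pi0_act. rewrite !cls_mul, tensA by auto. f_equal.
  rewrite !val_cls, !pi1_conj0, pi1_add0, pi1_add0l.
  apply (Pi1_eq_whisker _ HG _ _ (s (tens x (tens y z)))).
  rewrite !whisker_pi1_add.
  rewrite (whisker_untwist _ HG (nu (tens x y) z)) by (dc_solve; rewrite tensA; auto).
  rewrite (whisker_untwist _ HG (nu x (tens y z))) by dc_solve.
  replace (s (tens x (tens y z))) with (dom (phi (tens x y) z)) at 1
    by (rewrite phi_dom, tensA; auto).
  rewrite (whisker_conj _ HG _ (phi (tens x y) z)) by dc_solve.
  replace (s (tens x (tens y z))) with (dom (phi x (tens y z))) by (rewrite phi_dom; auto).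
  rewrite (whisker_conj _ HG _ (phi x (tens y z))) by dc_solve.
  rewrite !phi_cod.
  replace (s (tens x y)) with (dom (nu x y)) at 1 by (rewrite nu_dom; auto).
  rewrite whisker_untwist_tens by dc_solve.
  rewrite (whisker_conj_untwist _ HG (nu y z) (s x) (s (tens y z))) by dc_solve.
  unfold nu at 1 3. comp_nest. rewrite !compKV by dc_solve.
  rewrite !interchange_comp by dc_solve. rewrite !kappa_nu.
  rewrite (compI_r _ HG (kappa z)), (compI_r _ HG (kappa x)) by dc_solve.
  rewrite (tensA _ HG x y z). f_equal.
  transitivity (comp (tensm (tensm (kappa x) (kappa y)) (kappa z))
                     (comp (tensm (phi x y) (idm (s z))) (phi (tens x y) z))).
  { rewrite interchange_comp by dc_solve. rewrite compI_r by dc_solve. reflexivity. }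
  rewrite phi_assoc, tensmA by auto. rewrite interchange_comp by dc_solve.
  rewrite compI_r by dc_solve. reflexivity.
Qed.

(* The structure maps of Fcls are strictly unital, since phi and kappa are. *)
Lemma Fcls_unit_l x :
  comp (fmu Fcls (unit G) x) (tensm (feps Fcls) (idm (fo Fcls x))) = idm (fo Fcls x).
Proof.
  cbn. unfold pi0_act. rewrite pi1_conj0, pi1_add0l, pi1_add0, pi0_mul1l by auto. f_equal.
  unfold nu. rewrite (tens1l _ HG x), phi_unit_l, kappa_unit, tensm1l by auto.
  rewrite compI_r, compVl, untwist_idm by dc_solve. reflexivity.
Qed.
Lemma Fcls_unit_r x :
  comp (fmu Fcls x (unit G)) (tensm (idm (fo Fcls x)) (feps Fcls)) = idm (fo Fcls x).
Proof.
  cbn. unfold pi0_act. rewrite pi1_conj0, pi1_add0l, pi1_add0, pi0_mul1r by auto. f_equal.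
  unfold nu. rewrite (tens1r _ HG x), phi_unit_r, kappa_unit, tensm1r by auto.
  rewrite compI_r, compVl, untwist_idm by dc_solve. reflexivity.
Qed.

Lemma Fcls_monoidal : IsMonFun Fcls.
Proof.
  split.
  - reflexivity.
  - intro f. apply cls_iso. exists f; auto.
  - intro x. cbn. rewrite straighten_idm, untwist_idm, domI by auto. reflexivity.
  - exact Fcls_comp.
  - intros; symmetry; apply cls_mul.
  - reflexivity.
  - exact Fcls_mu_nat.
  - reflexivity.
  - reflexivity.
  - exact Fcls_assoc.
  - exact Fcls_unit_l.
  - exact Fcls_unit_r.
Qed.

(* Fsec is monoidal: naturality of phi^-1 is centrality of Aut(e), and its
   associativity is that of phi, inverted. *)
Lemma Fsec_mu_nat (p q : Mor E) :
  comp (fmu Fsec (cod p) (cod q)) (tensm (fm Fsec p) (fm Fsec q))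
  = comp (fm Fsec (tensm p q)) (fmu Fsec (dom p) (dom q)).
Proof.
  destruct p as [a g], q as [b h]; cbn. unfold pi0_act. rewrite val_pi0_mul.
  rewrite <- (phi_dom (proj1_sig g) (proj1_sig h)), <- (codV _ HG (phi _ _)).
  rewrite unit_aut_central by dc_solve. f_equal.
  rewrite domV, phi_cod, !pi0_fix by auto. symmetry. apply whisker_pi1_pair.
Qed.

Lemma Fsec_monoidal : IsMonFun Fsec.
Proof.
  split; cbn.
  - intros [a g]; simpl; dc_solve.
  - intros [a g]; simpl; dc_solve.
  - intro; rewrite val_pi1_zero; tens_norm; reflexivity.
  - intros [a g] [b h] H; simpl in *; subst h. rewrite val_pi1_add. apply whisker_comp; dc_solve.
  - intros; dc_solve.
  - intros; dc_solve.
  - exact Fsec_mu_nat.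
  - dc_solve.
  - dc_solve.
  - intros x y z. rewrite !val_pi0_mul, phi_s_l, phi_s_r.
    pose proof (phi_assoc (proj1_sig x) (proj1_sig y) (proj1_sig z)) as H.
    apply (f_equal minv) in H. rewrite !minv_comp in H by dc_solve.
    rewrite !minv_tensm, !minv_id, !pi0_fix in H by auto. exact H.
  - intro x. rewrite val_pi0_one, phi_unit_l, minv_id, tensm1l, pi0_fix, idm_comp_idm by auto.
    reflexivity.
  - intro x. rewrite val_pi0_one, phi_unit_r, minv_id, tensm1r, pi0_fix, idm_comp_idm by auto.
    reflexivity.
Qed.

Lemma kappa_monoidal_nat : IsMonNat (mfcomp Fcls Fsec) (mfid G) kappa.
Proof.
  split; cbn.
  - intro; dc_solve.
  - intro; dc_solve.
  - intro f. rewrite val_cls, (whisker_untwist _ HG (straighten f)) by dc_solve.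
    apply kappa_straighten.
  - intros x y. rewrite !val_cls, phi_s, (whisker_untwist _ HG (nu x y)) by dc_solve.
    rewrite compA, kappa_nu by dc_solve. rewrite <- compA by dc_solve.
    rewrite compVr, compI_r, compI_l by dc_solve. reflexivity.
  - rewrite kappa_unit, val_pi1_zero, val_pi0_one. tens_norm.
    rewrite !idm_comp_idm by auto. reflexivity.
Qed.

(* On fixed points kappa is trivial, so Fcls sends phi^-1 to the inverse of
   its own structure map nu. *)
Lemma Fcls_phi_inv (g h : Pi0) :
  pi1_add HG (untwist HG (straighten (minv (phi (proj1_sig g) (proj1_sig h)))))
             (untwist HG (nu (proj1_sig g) (proj1_sig h)))
  = pi1_zero HG.
Proof.
  apply (Pi1_eq_whisker _ HG _ _ (s (tens (proj1_sig g) (proj1_sig h)))).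
  rewrite whisker_pi1_add, !whisker_untwist by (unfold straighten; dc_solve).
  unfold straighten, nu. rewrite domV, codV, phi_dom, phi_cod, !pi0_fix by auto.
  rewrite (kappa_fix (s (tens (proj1_sig g) (proj1_sig h)))) by apply s_idem.
  rewrite (kappa_fix (proj1_sig g)), (kappa_fix (proj1_sig h)) by apply pi0_fix.
  rewrite minv_id, tensmI by auto.
  rewrite compI_l by dc_solve. rewrite (compI_l _ HG (phi _ _)) by dc_solve.
  rewrite <- compA by dc_solve. rewrite compKV by dc_solve. rewrite compVl by auto.
  rewrite val_pi1_zero. tens_norm. reflexivity.
Qed.

Lemma counit_monoidal_nat :
  IsMonNat (mfcomp Fsec Fcls) (mfid E) (fun g : Pi0 => ((pi1_zero HG, g) : Mor E)).
Proof.
  split; cbn.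
  - intro; symmetry; apply cls_val.
  - reflexivity.
  - intros [a g]; simpl. f_equal.
    + rewrite pi1_add0l, pi1_add0, straighten_whisker by auto. apply Pi1_eq.
      rewrite val_untwist by dc_solve. tens_norm. reflexivity.
    + rewrite domT, pi1_dom, domI, tens1l by auto. apply cls_val.
  - intros g h. unfold pi0_act. rewrite pi1_conj0, !pi1_add0l by auto. f_equal.
    apply Fcls_phi_inv.
  - f_equal. rewrite straighten_idm, untwist_idm, !pi1_add0 by auto. reflexivity.
Qed.

Lemma associative_family_split : is_split G.
Proof.
  exists Pi, A, Fcls, Fsec.
  split; [exact Fcls_monoidal|]. split; [exact Fsec_monoidal|].
  split; [exists kappa; exact kappa_monoidal_nat | eexists; exact counit_monoidal_nat].
Qed.

End Sufficiency.

Lemma cocycle_gives_split (G : TwoGroupData) (HG : IsStrict2Group G)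
  (s : Ob G -> Ob G) (psi : Ob G -> Ob G -> Mor G) :
  twisted_cocycle_data s psi -> is_split G.
Proof.
  intros [s_iso [s_sec [s_unit [psi_iso [psi_dom_cod [psi_unit psi_cocycle]]]]]].
  assert (psi_dom : forall x y, dom (psi x y) = unit G) by apply psi_dom_cod.
  assert (psi_cod : forall x y, cod (psi x y) = shat s x y) by apply psi_dom_cod.
  apply (associative_family_split G HG s s_iso s_sec s_unit (Phi s psi)).
  - intros x x' y y' Hx Hy. unfold Phi.
    rewrite (psi_iso x x' y y' Hx Hy), (s_iso (tens x x') (tens y y'))
      by (apply (iso_tensor _ HG); auto).
    reflexivity.
  - intros x y. eapply Phi_dom; eauto.
  - intros x y. eapply Phi_cod; eauto.
  - intro x. unfold Phi. rewrite (proj1 (psi_unit x)), tens1l, tensm1l by auto. reflexivity.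
  - intro x. unfold Phi. rewrite (proj2 (psi_unit x)), tens1r, tensm1l by auto. reflexivity.
  - intros x y z. apply (cocycle_psi_phi _ HG _ _ psi_dom psi_cod), psi_cocycle.
Qed.

Theorem theorem3p19 (G : TwoGroupData) (HG : IsStrict2Group G) :
  is_split G <->
  exists (s : Ob G -> Ob G) (psi : Ob G -> Ob G -> Mor G),
    (* s is a well-defined map pi_0(G) -> G_0 ... *)
    (forall x y : Ob G, iso x y -> s x = s y) /\
    (* ... which is a section of p ... *)
    (forall x : Ob G, iso (s x) x) /\
    (* ... and is normalized *)
    s (unit G) = unit G /\
    (* psi is a well-defined map pi_0(G) x pi_0(G) -> H_0 ... *)
    (forall x x' y y' : Ob G, iso x y -> iso x' y' -> psi x x' = psi y y') /\
    (* ... lifting s_hat (morphisms e -> s_hat([x],[x'])) ... *)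
    (forall x x' : Ob G, dom (psi x x') = unit G /\ cod (psi x x') = shat s x x') /\
    (* ... normalized ... *)
    (forall x : Ob G, psi (unit G) x = idm (unit G) /\ psi x (unit G) = idm (unit G)) /\
    (* ... and satisfying the cocycle condition *)
    (forall x x' x'' : Ob G,
        tensm (psi x x') (psi (tens x x') x'')
        = tensm (lact s x (psi x' x'')) (psi x (tens x' x''))).
Proof.
  split.
  - exact (split_has_cocycle G HG).
  - intros [s [psi Hdata]]. exact (cocycle_gives_split G HG s psi Hdata).
Qed.
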